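(* Let $\mathcal{H}_1=\mathcal{H}_{A_1}\otimes\mathcal{H}_{B_1}$ and $\mathcal{H}_2=\mathcal{H}_{A_2}\otimes\mathcal{H}_{B_2}$ be finite-dimensional bipartite Hilbert spaces, and let $N,K\geq 1$ be integers. Let $\sigma$ be a positive semidefinite operator on $\mathcal{H}_1$ with Schmidt number $N$ (with respect to the split $A_1|B_1$). Let $\eta$ be an operator on $\mathcal{H}_2$ that is positive on states with Schmidt number $KN$ (with respect to the split $A_2|B_2$). Then the operator $\sigma\otimes\eta$, acting on $\mathcal{H}_1\otimes\mathcal{H}_2\cong\mathcal{H}_A\otimes\mathcal{H}_B$ with $\mathcal{H}_A=\mathcal{H}_{A_1}\otimes\mathcal{H}_{A_2}$ and $\mathcal{H}_B=\mathcal{H}_{B_1}\otimes\mathcal{H}_{B_2}$, is positive on states with Schmidt number $K$ (with respect to the split $A|B$).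
   Context: The Schmidt rank of a pure vector $|\psi\rangle\in\mathcal{H}_X\otimes\mathcal{H}_Y$ is the number of nonzero terms in its Schmidt decomposition. The Schmidt number of a positive semidefinite operator $\rho$ on $\mathcal{H}_X\otimes\mathcal{H}_Y$ is the smallest $k$ such that $\rho$ can be written as a nonnegative combination of projectors $|\psi_i\rangle\langle\psi_i|$ onto vectors of Schmidt rank at most $k$. A Hermitian operator $X$ is said to be positive on states with Schmidt number $k$ if $\langle\psi|X|\psi\rangle\geq 0$ for every vector $|\psi\rangle$ of Schmidt rank at most $k$ (equivalently $\mathrm{Tr}(X\rho)\geq 0$ for every state $\rho$ of Schmidt number at most $k$). *)

From HB Require Import structures.
From mathcomp Require Import all_boot all_order all_algebra.
Set Implicit Arguments. Unset Strict Implicit. Unset Printing Implicit Defensive.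
Import Order.TTheory GRing.Theory Num.Theory.
Local Open Scope ring_scope.

Section Bipartite.
Variable C : numClosedFieldType.

Definition adjmx (m n : nat) (A : 'M[C]_(m, n)) : 'M[C]_(n, m) :=
  (map_mx Num.conj A)^T.

Definition hermitian (n : nat) (X : 'M[C]_n) : Prop := adjmx X = X.

(* H_X ⊗ H_Y = C^(dX*dY); basis vector |i>⊗|j> has index mxvec_index i j
   (the same convention as the Kronecker product tensmx). *)
Definition split_idx (m n : nat) (k : 'I_(m * n)) : 'I_m * 'I_n :=
  enum_val (cast_ord (esym (mxvec_cast m n)) k).

(* coefficient matrix psi_{ij} of a vector psi = sum_ij psi_ij |i>|j> *)
Definition coef_mx (dX dY : nat) (psi : 'cV[C]_(dX * dY)) : 'M[C]_(dX, dY) :=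
  vec_mx psi^T.

(* Schmidt rank = number of nonzero Schmidt coefficients
   = rank of the coefficient matrix *)
Definition schmidt_rank (dX dY : nat) (psi : 'cV[C]_(dX * dY)) : nat :=
  \rank (coef_mx psi).

Definition schmidt_number_le (dX dY : nat) (k : nat) (rho : 'M[C]_(dX * dY))
  : Prop :=
  exists (r : nat) (p : 'I_r -> C) (psi : 'I_r -> 'cV[C]_(dX * dY)),
    (forall i, 0 <= p i) /\ (forall i, (schmidt_rank (psi i) <= k)%N) /\
    rho = \sum_(i < r) p i *: (psi i *m adjmx (psi i)).

Definition schmidt_number_eq (dX dY : nat) (k : nat) (rho : 'M[C]_(dX * dY))
  : Prop :=
  schmidt_number_le k rho /\ forall k', schmidt_number_le k' rho -> (k <= k')%N.

Definition psd (n : nat) (X : 'M[C]_n) : Prop :=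
  hermitian X /\ forall v : 'cV[C]_n, 0 <= (adjmx v *m X *m v) 0 0.

Definition positive_on_SN (dX dY : nat) (k : nat) (X : 'M[C]_(dX * dY))
  : Prop :=
  hermitian X /\
  forall psi : 'cV[C]_(dX * dY), (schmidt_rank psi <= k)%N ->
    0 <= (adjmx psi *m X *m psi) 0 0.

(* sigma on (A1 ⊗ B1), eta on (A2 ⊗ B2);  sigma ⊗ eta regarded as an
   operator on (A1 ⊗ A2) ⊗ (B1 ⊗ B2). *)
Definition tensor_AB (a1 b1 a2 b2 : nat)
  (sigma : 'M[C]_(a1 * b1)) (eta : 'M[C]_(a2 * b2))
  : 'M[C]_((a1 * a2) * (b1 * b2)) :=
  \matrix_(r, c)
    let: (ra, rb) := split_idx r in
    let: (ca, cb) := split_idx c in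
    let: (ra1, ra2) := split_idx ra in
    let: (rb1, rb2) := split_idx rb in
    let: (ca1, ca2) := split_idx ca in
    let: (cb1, cb2) := split_idx cb in
    sigma (mxvec_index ra1 rb1) (mxvec_index ca1 cb1) *
    eta (mxvec_index ra2 rb2) (mxvec_index ca2 cb2).

End Bipartite.

From Pilot Require Import Defs.
From HB Require Import structures.
From mathcomp Require Import all_boot all_order all_algebra.
From mathcomp Require Import ring.
Set Implicit Arguments. Unset Strict Implicit. Unset Printing Implicit Defensive.
Import Order.TTheory GRing.Theory Num.Theory.
Local Open Scope ring_scope.

(* Write sigma = sum_i p_i |phi_i><phi_i| with every phi_i of Schmidt rank at
   most N. Then <psi| (|phi><phi| ⊗ eta) |psi> = <chi| eta |chi> for
   chi = (<phi| ⊗ 1) psi, and the coefficient matrix of chi is a contraction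
   of those of phi and psi, hence has rank at most N K when psi has Schmidt
   rank at most K.  So every term of <psi| sigma ⊗ eta |psi> is nonnegative. *)

Lemma split_idxK (m n : nat) (i : 'I_m) (j : 'I_n) :
  split_idx (mxvec_index i j) = (i, j).
Proof. by rewrite /split_idx /mxvec_index cast_ordK enum_rankK. Qed.

Lemma eq_mxvec_index (m n : nat) (i i' : 'I_m) (j j' : 'I_n) :
  (mxvec_index i j == mxvec_index i' j') = (i == i') && (j == j').
Proof.
apply/eqP/andP => [/(congr1 (@split_idx m n))|[/eqP-> /eqP->]] //.
by rewrite !split_idxK => -[-> ->].
Qed.

Lemma sum_mxvec_index (V : nmodType) (m n : nat) (F : 'I_(m * n) -> V) :
  \sum_(k < m * n) F k = \sum_(i < m) \sum_(j < n) F (mxvec_index i j).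
Proof.
rewrite pair_big (reindex _ (@curry_mxvec_bij m n)) /=.
by apply: eq_bigr => -[i j].
Qed.

Lemma sum_delta (R : pzSemiRingType) (T : finType) (a : T) (F : T -> R) :
  \sum_x (x == a)%:R * F x = F a.
Proof.
rewrite (bigD1 a) //= eqxx mul1r big1 ?addr0 // => x /negbTE ->.
by rewrite mul0r.
Qed.

Section Entries.
Variable C : numClosedFieldType.

Lemma adjmxE (m n : nat) (A : 'M[C]_(m, n)) (i : 'I_n) (j : 'I_m) :
  adjmx A i j = Num.conj (A j i).
Proof. by rewrite !mxE. Qed.

Lemma adjmx_mul (m n p : nat) (A : 'M[C]_(m, n)) (B : 'M[C]_(n, p)) :
  adjmx (A *m B) = adjmx B *m adjmx A.
Proof. by rewrite /adjmx map_mxM trmx_mul. Qed.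

Lemma hermitian_conj (n : nat) (X : 'M[C]_n) (i j : 'I_n) :
  Defs.hermitian X -> Num.conj (X i j) = X j i.
Proof. by move=> hX; rewrite -adjmxE hX. Qed.

Lemma quad_form_sum (I : finType) (n : nat) (v : 'cV[C]_n) (p : I -> C)
    (X : I -> 'M[C]_n) :
  (adjmx v *m (\sum_i p i *: X i) *m v) 0 0 =
  \sum_i p i * (adjmx v *m X i *m v) 0 0.
Proof.
rewrite mulmx_sumr mulmx_suml summxE; apply: eq_bigr => i _.
by rewrite -scalemxAr -scalemxAl mxE.
Qed.

Lemma coef_mxE (m n : nat) (v : 'cV[C]_(m * n)) (i : 'I_m) (j : 'I_n) :
  coef_mx v i j = v (mxvec_index i j) 0.
Proof. by rewrite !mxE. Qed.

End Entries.

Section TensorAB.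
Variables (C : numClosedFieldType) (a1 b1 a2 b2 : nat).

(* (A1 ⊗ A2) ⊗ (B1 ⊗ B2) regrouped as (A1 ⊗ B1) ⊗ (A2 ⊗ B2). *)
Definition sub1_idx (r : 'I_((a1 * a2) * (b1 * b2))) : 'I_(a1 * b1) :=
  mxvec_index (split_idx (split_idx r).1).1 (split_idx (split_idx r).2).1.

Definition sub2_idx (r : 'I_((a1 * a2) * (b1 * b2))) : 'I_(a2 * b2) :=
  mxvec_index (split_idx (split_idx r).1).2 (split_idx (split_idx r).2).2.

Lemma sub_idxE (i1 : 'I_a1) (i2 : 'I_a2) (j1 : 'I_b1) (j2 : 'I_b2) :
  let r := mxvec_index (mxvec_index i1 i2) (mxvec_index j1 j2) in
  sub1_idx r = mxvec_index i1 j1 /\ sub2_idx r = mxvec_index i2 j2.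
Proof. by rewrite /sub1_idx /sub2_idx !split_idxK. Qed.

Lemma tensor_ABE (sigma : 'M[C]_(a1 * b1)) (eta : 'M[C]_(a2 * b2)) r c :
  tensor_AB sigma eta r c =
  sigma (sub1_idx r) (sub1_idx c) * eta (sub2_idx r) (sub2_idx c).
Proof.
rewrite mxE /sub1_idx /sub2_idx.
case: (split_idx r) => ra rb; case: (split_idx ra) => ra1 ra2.
case: (split_idx rb) => rb1 rb2; case: (split_idx c) => ca cb.
by case: (split_idx ca) => ca1 ca2; case: (split_idx cb) => cb1 cb2.
Qed.

Lemma tensor_AB_sum (I : finType) (p : I -> C) (sigma : I -> 'M[C]_(a1 * b1))
    (eta : 'M[C]_(a2 * b2)) :
  tensor_AB (\sum_i p i *: sigma i) eta = \sum_i p i *: tensor_AB (sigma i) eta.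
Proof.
apply/matrixP => r c; rewrite tensor_ABE !summxE mulr_suml.
by apply: eq_bigr => i _; rewrite [RHS]mxE tensor_ABE [X in X * _]mxE mulrA.
Qed.

Lemma hermitian_tensor_AB (sigma : 'M[C]_(a1 * b1)) (eta : 'M[C]_(a2 * b2)) :
  Defs.hermitian sigma -> Defs.hermitian eta ->
  Defs.hermitian (tensor_AB sigma eta).
Proof.
move=> hsigma heta; apply/matrixP => r c.
by rewrite adjmxE !tensor_ABE rmorphM /= !hermitian_conj.
Qed.

(* The operator <phi| ⊗ 1 from H_1 ⊗ H_2 to H_2. *)
Definition partial_bra (phi : 'cV[C]_(a1 * b1)) :
    'M[C]_(a2 * b2, (a1 * a2) * (b1 * b2)) :=
  \matrix_(l, r) ((l == sub2_idx r)%:R * Num.conj (phi (sub1_idx r) 0)).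

Lemma tensor_AB_rank_one (phi : 'cV[C]_(a1 * b1)) (eta : 'M[C]_(a2 * b2)) :
  tensor_AB (phi *m adjmx phi) eta =
  adjmx (partial_bra phi) *m eta *m partial_bra phi.
Proof.
apply/matrixP => r c; rewrite tensor_ABE mxE big_ord1 adjmxE mxE.
under eq_bigr => l _ do rewrite mxE [in X in _ * X]mxE mulr_suml.
rewrite exchange_big.
transitivity (\sum_k (k == sub2_idx r)%:R * \sum_l (l == sub2_idx c)%:R *
  (phi (sub1_idx r) 0 * eta k l * Num.conj (phi (sub1_idx c) 0))).
  by rewrite !sum_delta mulrAC.
apply: eq_bigr => k _; rewrite mulr_sumr; apply: eq_bigr => l _.
rewrite adjmxE mxE rmorphM rmorph_nat /= conjCK; ring.
Qed.

Definition contract_coef (Phi : 'M[C]_(a1, b1)) (Psi : 'M[C]_(a1 * a2, b1 * b2)) :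
    'M[C]_(a2, b2) :=
  \matrix_(i, j) \sum_a \sum_b
     Num.conj (Phi a b) * Psi (mxvec_index a i) (mxvec_index b j).

Lemma coef_mx_partial_bra (phi : 'cV[C]_(a1 * b1))
    (psi : 'cV[C]_((a1 * a2) * (b1 * b2))) :
  coef_mx (partial_bra phi *m psi) = contract_coef (coef_mx phi) (coef_mx psi).
Proof.
apply/matrixP => i j; rewrite coef_mxE !mxE sum_mxvec_index sum_mxvec_index.
apply: eq_bigr => a _; under eq_bigr => x _ do rewrite sum_mxvec_index.
rewrite exchange_big; apply: eq_bigr => b _.
transitivity (\sum_x (x == i)%:R * \sum_y (y == j)%:R *
  (Num.conj (phi (mxvec_index a b) 0) *
   psi (mxvec_index (mxvec_index a x) (mxvec_index b y)) 0)).
  apply: eq_bigr => x _; rewrite mulr_sumr; apply: eq_bigr => y _.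
  rewrite mxE; have [-> ->] := sub_idxE a x b y.
  by rewrite eq_mxvec_index -mulnb natrM !(eq_sym x) (eq_sym y) !mulrA.
by rewrite !sum_delta !coef_mxE.
Qed.

(* Bilinearity of contract_coef makes it factor through 'I_(r * k). *)
Lemma rank_contract_coef_mul (r k : nat) (L : 'M[C]_(a1, r)) (R : 'M[C]_(r, b1))
    (X : 'M[C]_(a1 * a2, k)) (Y : 'M[C]_(k, b1 * b2)) :
  (\rank (contract_coef (L *m R) (X *m Y)) <= r * k)%N.
Proof.
pose U : 'M[C]_(a2, r * k) := \matrix_(i, st) \sum_a
  Num.conj (L a (split_idx st).1) * X (mxvec_index a i) (split_idx st).2.
pose V : 'M[C]_(r * k, b2) := \matrix_(st, j) \sum_b
  Num.conj (R (split_idx st).1 b) * Y (split_idx st).2 (mxvec_index b j).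
suff -> : contract_coef (L *m R) (X *m Y) = U *m V.
  exact: leq_trans (mxrankM_maxl _ _) (rank_leq_col _).
apply/matrixP => i j; rewrite !mxE sum_mxvec_index.
pose T a b s t := Num.conj (L a s) * Num.conj (R s b) *
  X (mxvec_index a i) t * Y t (mxvec_index b j).
transitivity (\sum_a \sum_b \sum_s \sum_t T a b s t).
  apply: eq_bigr => a _; apply: eq_bigr => b _.
  rewrite !mxE rmorph_sum mulr_suml; apply: eq_bigr => s _.
  rewrite mulr_sumr; apply: eq_bigr => t _; rewrite rmorphM /= /T; ring.
transitivity (\sum_s \sum_t \sum_a \sum_b T a b s t).
  rewrite pair_big [RHS]pair_big /=.
  under eq_bigr => ab _ do rewrite pair_big /=.
  under [RHS]eq_bigr => st _ do rewrite pair_big /=.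
  by rewrite exchange_big.
apply: eq_bigr => s _; apply: eq_bigr => t _.
rewrite !mxE !split_idxK /= mulr_suml; apply: eq_bigr => a _.
rewrite mulr_sumr; apply: eq_bigr => b _; rewrite /T; ring.
Qed.

Lemma rank_contract_coef (Phi : 'M[C]_(a1, b1)) (Psi : 'M[C]_(a1 * a2, b1 * b2)) :
  (\rank (contract_coef Phi Psi) <= \rank Phi * \rank Psi)%N.
Proof.
by rewrite -{1}(mulmx_base Phi) -{1}(mulmx_base Psi) rank_contract_coef_mul.
Qed.

Lemma schmidt_rank_partial_bra (phi : 'cV[C]_(a1 * b1))
    (psi : 'cV[C]_((a1 * a2) * (b1 * b2))) :
  (schmidt_rank (partial_bra phi *m psi) <=
   schmidt_rank phi * schmidt_rank psi)%N.
Proof. by rewrite /schmidt_rank coef_mx_partial_bra rank_contract_coef. Qed.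

End TensorAB.

Theorem lemma1 (C : numClosedFieldType) (a1 b1 a2 b2 : nat) (N K : nat)
  (sigma : 'M[C]_(a1 * b1)) (eta : 'M[C]_(a2 * b2)) :
  (1 <= N)%N -> (1 <= K)%N ->
  psd sigma -> schmidt_number_eq N sigma ->
  positive_on_SN (K * N) eta ->
  positive_on_SN K (tensor_AB sigma eta).
Proof.
move=> _ _ [hsigma _] [[r [p [phi [p_ge0 [rank_phi sigmaE]]]]] _] [heta eta_ge0].
split=> [|psi rank_psi]; first exact: hermitian_tensor_AB.
rewrite sigmaE tensor_AB_sum quad_form_sum; apply: sumr_ge0 => i _.
apply: mulr_ge0 (p_ge0 i) _.
rewrite tensor_AB_rank_one !mulmxA -mulmxA -adjmx_mul; apply: eta_ge0.
apply: leq_trans (schmidt_rank_partial_bra _ _) _.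
by rewrite [(K * N)%N]mulnC; exact: leq_mul.
Qed.
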